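(* Let $(X,d)$ be a metric space and $T:X\to X$ a map. The system $(X,T)$ has sensitive dependence on initial conditions if and only if there is $\delta>0$ such that $r_\delta(x)$ is infinitesimal (in $\mathcal R$) for every $x\in X$.
   Context: $(X,T)$ has sensitive dependence on initial conditions if there is $\delta>0$ such that for every $x\in X$ and every neighborhood $U$ of $x$ there are $y\in U$ and $k\in\mathbb N$ with $d(T^k(x),T^k(y))>\delta$. For $x\in X$, $n\in\mathbb N$, $\epsilon>0$: $B(n,x,\epsilon)=\{y\in X: d(T^i(y),T^i(x))\le\epsilon \text{ for all } 0\le i\le n\}$ and $r(x,n,\epsilon)=\sup\{r>0: B_r(x)\subset B(n,x,\epsilon)\}$, where $B_r(x)$ is the open ball. Hyperreals: $\mathbb R^*$ is an ordered field containing $\mathbb R$, with a surjective ring homomorphism $J:\mathbb R^{\mathbb N}\to\mathbb R^*$ satisfying: if $a\in\mathbb R$ and there is $k\ge1$ with $\phi_{kn}\ge a$ for all $n\ge1$ then $J(\phi)\ge a$. $\xi\in\mathbb R^*$ is bounded if $|\xi|<k$ for some $k\in\mathbb N$. For nonzero $a,b$, $a\simeq b$ iff $a/b$, $b/a$ are bounded; $[a]$ is the class; $\mathbb R^*/{\simeq}$ is ordered by $[a]\le[b]$ iff for all $x\in[a],y\in[b]$, $x\simeq y$ or $x<y$. $\mathcal R$ is the totally ordered set of equivalence classes of monotone sequences in $\mathbb R^*/{\simeq}$ under $(a_i)\approx(b_j)$ iff neither $(a_i)<(b_j)$ nor $(b_j)<(a_i)$, where $(a_i)<(b_j)$ iff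 $\exists M$ with $a_n<b_m$ for all $n,m>M$; $\mathbb R^*/{\simeq}$ embeds into $\mathcal R$ as constant sequences. $r_\epsilon(x)=[J((r(x,n,\epsilon))_n)]$. An element of $\mathcal R$ is infinitesimal if it is strictly less than $c=[J(v)]$, the class of a constant sequence with value $v>0$ (the class of bounded, non-infinitesimal hyperreals). *)

From HB Require Import structures.
From mathcomp Require Import all_boot all_order all_algebra.
From mathcomp Require Import boolp classical_sets reals.
Set Implicit Arguments. Unset Strict Implicit. Unset Printing Implicit Defensive.
Import Order.TTheory GRing.Theory Num.Theory.
Local Open Scope ring_scope.
Local Open Scope classical_set_scope.

Section Dynamics.
Variables (R : realType) (X : Type) (d : X -> X -> R) (T : X -> X).

Definition is_metric : Prop :=
  [/\ forall x y, 0 <= d x y,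
      forall x y, d x y = 0 <-> x = y,
      forall x y, d x y = d y x &
      forall x y z, d x z <= d x y + d y z].

Definition oball (x : X) (r : R) : set X := [set y | d x y < r].

Definition is_nbhd (x : X) (U : set X) : Prop :=
  exists2 e : R, 0 < e & oball x e `<=` U.

Definition sensitive : Prop :=
  exists2 delta : R, 0 < delta &
    forall (x : X) (U : set X), is_nbhd x U ->
      exists2 y, U y & exists k : nat, delta < d (iter k T x) (iter k T y).

Definition bowen_ball (n : nat) (x : X) (eps : R) : set X :=
  [set y | forall i : nat, (i <= n)%N -> d (iter i T y) (iter i T x) <= eps].

Definition radii (x : X) (n : nat) (eps : R) : set R :=
  [set r | 0 < r /\ oball x r `<=` bowen_ball n x eps].

(* r(x,n,eps) = sup (radii x n eps).  Conventions for the degenerate cases: empty set -> 0, unbounded set (= all r > 0) -> 1. *)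
Definition rad (x : X) (n : nat) (eps : R) : R :=
  if `[< has_sup (radii x n eps) >] then sup (radii x n eps)
  else if `[< radii x n eps !=set0 >] then 1 else 0.

End Dynamics.

Section Hyperreals.
Variables (R : realType) (F : realFieldType).

(* the axioms on R^* and J : R^N -> R^*; a real a is seen in R^* as J (const a) *)
Definition hyperreal_map (J : (nat -> R) -> F) : Prop :=
  [/\ forall phi psi, J (fun n => phi n + psi n) = J phi + J psi,
      forall phi psi, J (fun n => phi n * psi n) = J phi * J psi,
      J (fun _ => 1) = 1,
      forall xi : F, exists phi, J phi = xi &
      forall (a : R) (phi : nat -> R),
        (exists2 k : nat, (1 <= k)%N &
            forall n : nat, (1 <= n)%N -> a <= phi (k * n)%N) ->
        J (fun _ => a) <= J phi].

Definition hbounded (xi : F) : Prop := exists k : nat, `|xi| < k%:R.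

Definition hsim (a b : F) : Prop :=
  [/\ 0 < a, 0 < b, hbounded (a / b) & hbounded (b / a)].

(* [a] <= [b] and [a] < [b] in R^*/≃, via representatives *)
Definition cle (a b : F) : Prop :=
  forall x y, hsim x a -> hsim y b -> hsim x y \/ x < y.
Definition clt (a b : F) : Prop := cle a b /\ ~ hsim a b.

(* (a_i) < (b_j) in the order defining the set \mathcal R *)
Definition seq_lt (a b : nat -> F) : Prop :=
  exists M : nat, forall n m : nat, (M < n)%N -> (M < m)%N -> clt (a n) (b m).

(* an element of \mathcal R (given by a monotone sequence of representatives)
   is infinitesimal iff it is < c, c = class of the constant sequence [J v], v = 1 *)
Definition R_infinitesimal (J : (nat -> R) -> F) (s : nat -> F) : Prop :=
  seq_lt s (fun _ => J (fun _ => 1)).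

(* r_eps(x) = [J((r(x,n,eps))_n)] is infinitesimal in \mathcal R (embedded as
   a constant sequence); the degenerate case J(...) = 0 (class undefined,
   below every class) counts as infinitesimal *)
Definition r_infinitesimal (J : (nat -> R) -> F) (X : Type) (d : X -> X -> R)
    (T : X -> X) (eps : R) (x : X) : Prop :=
  let xi := J (fun n => rad d T x n eps) in
  xi = 0 \/ (0 < xi /\ R_infinitesimal J (fun _ => xi)).

End Hyperreals.

(* A hyperreal J(phi) is infinitesimal in the sense of R exactly when
   J(phi) * (m+1) < 1 for every m.  Sensitivity at x forces, for every
   c = 1/(m+2), some orbit point within c of x to separate by more than delta,
   so r(x, n, delta) <= c for all large n and hence J(r) <= J(c) = 1/(m+2).
   Conversely, if every orbit starting in some ball B_e(x) stays delta-close
   to the orbit of x, then r(x, n, delta) >= min(e, 1) for every n, which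
   bounds J(r) below by a standard positive real. *)

From Pilot Require Import Defs.
From HB Require Import structures.
From mathcomp Require Import all_boot all_order all_algebra.
From mathcomp Require Import boolp classical_sets reals.
Set Implicit Arguments.
Unset Strict Implicit.
Unset Printing Implicit Defensive.

Import Order.TTheory GRing.Theory Num.Theory.
Local Open Scope ring_scope.

Section ClassOrder.
Variable F : realFieldType.

Lemma hsim_refl (a : F) : 0 < a -> hsim a a.
Proof.
by move=> a0; split => //; exists 2%N; rewrite divff ?gt_eqF // normr1 ltr1n.
Qed.

Lemma clt1P (xi : F) : 0 < xi ->
  clt xi 1 <-> forall m : nat, xi * m.+1%:R < 1.
Proof.
move=> xi0; split.
- move=> [le_xi_1 not_sim] m.
  case: (le_xi_1 xi 1 (hsim_refl xi0) (hsim_refl ltr01)) => [//|xi_lt1].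
  have xi_bounded : hbounded (xi / 1).
    by exists 1%N; rewrite divr1 ger0_norm ?ltW.
  rewrite ltNge; apply/negP => xim_ge1; apply: not_sim; split => //.
  exists m.+2; rewrite div1r ger0_norm ?invr_ge0 ?ltW //.
  rewrite -div1r ltr_pdivrMr //; apply: (le_lt_trans xim_ge1).
  by rewrite [_ * xi]mulrC ltr_pM2l // ltr_nat.
- move=> small; split.
  + move=> x y [x0 _ [k1 xk1] _] [y0 _ _ [k2 yk2]]; right.
    rewrite ger0_norm ?divr_ge0 ?ltW // ltr_pdivrMr // in xk1.
    rewrite ger0_norm ?divr_ge0 ?ltW // ltr_pdivrMr // in yk2.
    have k2_gt0 : 0 < k2%:R :> F.
      rewrite ltr0n lt0n; apply/negP => /eqP k20; move: yk2.
      by rewrite k20 mul0r ltNge ler01.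
    have xi_k1k2 : xi * (k1 * k2)%:R < 1.
      apply: le_lt_trans (small (k1 * k2)%N).
      by rewrite ler_pM2l // ler_nat.
    rewrite -(ltr_pM2r k2_gt0) [y * _]mulrC; apply: lt_trans yk2.
    apply: lt_trans xi_k1k2; rewrite natrM mulrA ltr_pM2r //.
    by rewrite mulrC.
  + move=> [_ _ _ [k inv_xi_k]].
    rewrite div1r ger0_norm ?invr_ge0 ?ltW // -div1r ltr_pdivrMr // in inv_xi_k.
    have : k%:R * xi <= xi * k.+1%:R by rewrite mulrC ler_pM2l // ler_nat.
    move=> le_k; have := lt_trans inv_xi_k (le_lt_trans le_k (small k)).
    by rewrite ltxx.
Qed.

End ClassOrder.

Section HyperrealMap.
Variables (R : realType) (F : realFieldType) (J : (nat -> R) -> F).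
Hypothesis HJ : hyperreal_map J.

Lemma J_const0 : J (fun _ => 0) = 0.
Proof.
case: HJ => JD _ _ _ _.
have := JD (fun _ => 0) (fun _ => 0).
rewrite (_ : (fun _ => 0 + 0) = (fun _ => 0)); last by apply: funext => n; rewrite addr0.
by move=> J00; apply: (addrI (J (fun _ => 0))); rewrite addr0 -J00.
Qed.

Lemma JN (phi : nat -> R) : J (fun n => - phi n) = - J phi.
Proof.
case: HJ => JD _ _ _ _.
have := JD phi (fun n => - phi n).
rewrite (_ : (fun n => phi n - phi n) = (fun _ => 0)); last by apply: funext => n; rewrite subrr.
by rewrite J_const0 addrC => /esym/eqP; rewrite addr_eq0 => /eqP.
Qed.

Lemma J_const_mulrn (c : R) (k : nat) :
  J (fun _ => c * k%:R) = J (fun _ => c) * k%:R.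
Proof.
case: HJ => JD JM J1 _ _.
have J_nat : J (fun _ => k%:R) = k%:R.
  elim: k => [|k IHk]; first by rewrite J_const0.
  rewrite (_ : (fun _ => k.+1%:R) = (fun n => (fun _ => 1) n + (fun _ => k%:R) n)).
    by rewrite JD J1 IHk mulrS.
  by apply: funext => n; rewrite /= mulrS.
by rewrite -J_nat -JM.
Qed.

Lemma J_ge_const (phi : nat -> R) (a : R) :
  (forall n, a <= phi n) -> J (fun _ => a) <= J phi.
Proof. by case: HJ => _ _ _ _ Jmono le_a; apply: Jmono; exists 1%N. Qed.

Lemma J_le_const (phi : nat -> R) (a : R) (k : nat) : (1 <= k)%N ->
  (forall n : nat, (1 <= n)%N -> phi (k * n)%N <= a) -> J phi <= J (fun _ => a).
Proof.
case: HJ => JD _ _ _ Jmono k_ge1 le_a.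
have := Jmono 0 (fun n => (fun _ => a) n + (fun n => - phi n) n).
rewrite J_const0 JD JN subr_ge0; apply; exists k => // n n_ge1.
by rewrite /= subr_ge0 le_a.
Qed.

End HyperrealMap.

Section Radius.
Variables (R : realType) (X : Type) (d : X -> X -> R) (T : X -> X).
Hypothesis d_sym : forall x y, d x y = d y x.

Lemma rad_ge0 x n eps : 0 <= Defs.rad d T x n eps.
Proof.
rewrite /Defs.rad; case: asboolP => [[[r r_in] r_ub]|_].
  exact: le_trans (ltW r_in.1) (ub_le_sup r_ub r_in).
by case: asboolP => _ //; rewrite ler01.
Qed.

Lemma rad_le x n eps r : 0 <= r ->
  (forall r', radii d T x n eps r' -> r' <= r) -> Defs.rad d T x n eps <= r.
Proof.
move=> r0 ub_r; rewrite /Defs.rad; case: asboolP => [[ne _]|no_sup].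
  exact: ge_sup.
by case: asboolP => // ne; exfalso; apply: no_sup; split => //; exists r.
Qed.

Lemma rad_ge x n eps e : radii d T x n eps e ->
  Order.min e 1 <= Defs.rad d T x n eps.
Proof.
move=> e_in; rewrite /Defs.rad; case: asboolP => [[_ e_ub]|no_sup].
  by rewrite ge_min (ub_le_sup e_ub e_in).
case: asboolP => [_|empty]; first by rewrite ge_min lexx orbT.
by exfalso; apply: empty; exists e.
Qed.

Lemma rad_le_separation x y k eps c : 0 <= c -> d x y < c ->
  eps < d (iter k T x) (iter k T y) ->
  forall n, (k <= n)%N -> Defs.rad d T x n eps <= c.
Proof.
move=> c_ge0 dxy_c sep n le_kn; apply: rad_le => // r [_ ball_in_bowen].
rewrite leNgt; apply/negP => c_lt_r.
have := ball_in_bowen y (lt_trans dxy_c c_lt_r) k le_kn.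
by rewrite d_sym leNgt sep.
Qed.

End Radius.

Section Sensitivity.
Variables (R : realType) (F : realFieldType) (J : (nat -> R) -> F).
Hypothesis HJ : hyperreal_map J.
Variables (X : Type) (d : X -> X -> R) (T : X -> X).
Hypothesis d_sym : forall x y, d x y = d y x.

Lemma r_infinitesimalP eps x :
  r_infinitesimal J d T eps x <->
  forall m : nat, J (fun n => Defs.rad d T x n eps) * m.+1%:R < 1.
Proof.
case: HJ => _ _ J1 _ _; rewrite /r_infinitesimal /=.
set xi := J _; have xi_ge0 : 0 <= xi.
  by rewrite -(J_const0 HJ); apply: (J_ge_const HJ) => n; apply: rad_ge0.
split.
- case=> [-> m|[xi_gt0 [M inf]]]; first by rewrite mul0r ltr01.
  by apply/clt1P => //; rewrite -J1; apply: inf (ltnSn M) (ltnSn M).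
- move: xi_ge0; rewrite le_eqVlt => /orP[/eqP <-|xi_gt0 small]; first by left.
  by right; split => //; exists 0%N => n m _ _; rewrite J1; apply/clt1P.
Qed.

Lemma sensitive_r_infinitesimal delta :
  (forall x (U : set X), is_nbhd d x U ->
     exists2 y, U y & exists k : nat, delta < d (iter k T x) (iter k T y)) ->
  forall x, r_infinitesimal J d T delta x.
Proof.
move=> sens x; apply/r_infinitesimalP => m.
set c : R := m.+2%:R^-1; have c_gt0 : 0 < c by rewrite invr_gt0 ltr0n.
have [y dxy_c [k sep]] : exists2 y, oball d x c y &
    exists k, delta < d (iter k T x) (iter k T y) by apply: sens; exists c.
have J_rad_le : J (fun n => Defs.rad d T x n delta) <= J (fun _ => c).
  apply: (J_le_const HJ (k := k.+1)) => // n n_ge1.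
  apply: (rad_le_separation d_sym (ltW c_gt0) dxy_c sep).
  by rewrite (leq_trans (leqnSn k)) // leq_pmulr.
have Jc_inv : J (fun _ => c) * m.+2%:R = 1.
  case: HJ => _ _ J1 _ _.
  by rewrite -J_const_mulrn // /c mulVf ?pnatr_eq0.
have Jc_gt0 : 0 < J (fun _ => c).
  have : 0 < J (fun _ => c) * m.+2%:R by rewrite Jc_inv ltr01.
  by rewrite pmulr_lgt0 ?ltr0n.
apply: (le_lt_trans (y := J (fun _ => c) * m.+1%:R)).
  by rewrite ler_pM2r ?ltr0n.
by rewrite -[X in _ < X]Jc_inv ltr_pM2l // ltr_nat.
Qed.

Lemma r_infinitesimal_sensitive delta x (U : set X) :
  r_infinitesimal J d T delta x -> is_nbhd d x U ->
  exists2 y, U y & exists k : nat, delta < d (iter k T x) (iter k T y).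
Proof.
move=> /r_infinitesimalP small [e e_gt0 ball_U]; apply: contrapT => no_sep.
have ball_in_bowen n : radii d T x n delta e.
  split => // y dxy_e i _; rewrite d_sym leNgt; apply/negP => sep.
  by apply: no_sep; exists y; [apply: ball_U | exists i].
set c := Order.min e 1; have c_gt0 : 0 < c by rewrite lt_min e_gt0 ltr01.
have Jc_le : J (fun _ => c) <= J (fun n => Defs.rad d T x n delta).
  by apply: (J_ge_const HJ) => n; apply: rad_ge.
set m := Num.Def.archi_bound c^-1.
have cm_ge1 : 1 <= c * m.+1%:R.
  have cm_gt1 : 1 < c * m%:R.
    by rewrite -ltr_pdivrMl // mulr1 archi_boundP // invr_ge0 ltW.
  by apply: le_trans (ltW cm_gt1) _; rewrite ler_pM2l // ler_nat.
have Jcm_ge1 : 1 <= J (fun _ => c) * m.+1%:R.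
  case: HJ => _ _ J1 _ _.
  by rewrite -J_const_mulrn // -J1; apply: J_ge_const.
have := small m; rewrite ltNge => /negP; apply.
by apply: le_trans Jcm_ge1 _; rewrite ler_pM2r ?ltr0n.
Qed.

End Sensitivity.

Theorem mainTheorem4 (R : realType) (F : realFieldType)
    (J : (nat -> R) -> F) (HJ : hyperreal_map J)
    (X : Type) (d : X -> X -> R) (Hd : is_metric d) (T : X -> X) :
  sensitive d T <->
  exists2 delta : R, 0 < delta & forall x : X, r_infinitesimal J d T delta x.
Proof.
have [_ _ d_sym _] := Hd.
split=> [[delta delta_gt0 sens]|[delta delta_gt0 inf]].
- by exists delta => //; apply: sensitive_r_infinitesimal sens.
- by exists delta => // x U; apply: r_infinitesimal_sensitive (inf x).
Qed.
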